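(* Suppose that computing the fixed point of $\bm{x}\mapsto\bm{f}(\bm{h}(\bm{x},\bm{p},\kappa),\kappa)$, for any given $\bm{p}$ and $\kappa$, has complexity $O(K)$. Treat the tolerance $\epsilon>0$, the iteration parameter $\tau$ and the maximum power $p^{max}$ as constants. Then algorithm PALO, run on a network with $n$ cells and $m$ UEs, terminates and runs in time $O(Km^2n^2)$.
   Context: Cellular network model. $\mathcal{I}$ is a set of $n$ cells and $\mathcal{J}$ a set of $m$ UEs. An association is $\kappa\in\{0,1\}^{n\times m}$, with $\mathcal{I}_j=\{i:\kappa_{ij}=1\}$ and $\mathcal{J}_i=\{j:\kappa_{ij}=1\}$. Demands $\bm{d}\in\mathbb{R}^m_{>0}$, noise $\sigma^2>0$, gains $g_{ij}>0$ and constants $M,B>0$ are fixed. For power $\bm{p}\in\mathbb{R}^n_{>0}$ with $p_i\le p^{max}$: - $h_j(\bm{x},\bm{p},\kappa)=\dfrac{\sum_{i\in\mathcal{I}_j}p_ig_{ij}}{\sum_{k\notin\mathcal{I}_j}p_kg_{kj}x_k+\sigma^2}$; - $f_i(\bm{\gamma},\kappa)=\sum_{j\in\mathcal{J}_i}\dfrac{d_j}{MB\log_2(1+\gamma_j)}$; - $\mathrm{Fix}\{\cdot\}$ denotes the (unique) fixed point of the map $\bm{x}\mapsto\bm{f}(\bm{h}(\bm{x},\bm{p},\kappa),\kappa)$. POLO$(\bm{p},\bm{x},\kappa,\epsilon)$: 1. Set $\check\beta=0$, $\hat\beta=1$, $\bm{p}'=\bm{p}+\epsilon\bm{1}$ and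 $\bm{p}''=\bm{p}$. 2. While $\|\bm{p}'-\bm{p}''\|>\epsilon$ (Euclidean norm): - set $\beta=(\check\beta+\hat\beta)/2$, then $\bm{p}''\leftarrow\bm{p}'$ and $\bm{p}'\leftarrow\beta\bm{p}$; - compute $\bm{x}'=\mathrm{Fix}\{\bm{f}(\bm{h}(\bm{x},\bm{p}',\kappa),\kappa)\}$ and set $\bm{x}\leftarrow\bm{x}'$; - if $\max_i x'_i>1$ set $\check\beta\leftarrow\beta$, otherwise set $\hat\beta\leftarrow\beta$. 3. Return $(\bm{p}',\bm{x}')$. AOLO$(\bm{p},\bm{x},\kappa,\tau)$, with working copy $\kappa'$ of $\kappa$: for each pair $(i,j)$ with $\kappa_{ij}=0$: 1. Set $\bm{x}^{(0)}=\bm{x}$. 2. For $k=1,\dots,\tau$, if $\kappa_{ij}=0$: - set $\kappa'_{ij}=1$ and $\bm{x}^{(k)}=\bm{f}(\bm{h}(\bm{x}^{(k-1)},\bm{p},\kappa'),\kappa)$; - if $x^{(k)}_i\le f_i(\bm{h}(\bm{x}^{(k)},\bm{p},\kappa'),\kappa')$, set $\kappa_{ij}=1$ and $\bm{x}'=\mathrm{Fix}\{\bm{f}(\bm{h}(\bm{x},\bm{p},\kappa'),\kappa')\}$. It returns $(\kappa',\bm{x}')$. AOLO only changes entries of the association from $0$ to $1$. PALO$(\bm{p},\bm{x},\kappa,\epsilon,\tau)$ repeats the following until the association returned by AOLO equals its input association: - $(\bm{p}',\bm{x}')\leftarrow$ POLO$(\bm{p},\bm{x},\kappa,\epsilon)$;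 - $(\kappa',\bm{x}'')\leftarrow$ AOLO$(\bm{p}',\bm{x}',\kappa,\tau)$; - $(\bm{p},\bm{x},\kappa)\leftarrow(\bm{p}',\bm{x}'',\kappa')$. It outputs $\bm{p}'$ and $\kappa'$. *)

From HB Require Import structures.
From mathcomp Require Import all_boot all_order all_algebra.
From mathcomp Require Import boolp classical_sets reals exp.

Set Implicit Arguments.
Unset Strict Implicit.
Unset Printing Implicit Defensive.

Import Order.TTheory GRing.Theory Num.Theory.
Local Open Scope ring_scope.

(* Network data: n cells, m UEs.                                            *)
(* Vectors indexed by cells/UEs are row vectors 'rV_n / 'rV_m; an           *)
(* association kappa is a boolean n x m matrix.                             *)
Record network (R : realType) (n m : nat) := Network {
  dem : 'rV[R]_m;
  sigma2 : R;
  gain : 'M[R]_(n, m);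
  cM : R;
  cB : R }.

Section Model.
Variables (R : realType) (n m : nat) (N : network R n m).

Definition log2 (y : R) : R := ln y / ln 2.

Definition hvec (x p : 'rV[R]_n) (ka : 'M[bool]_(n, m)) : 'rV[R]_m :=
  \row_j ((\sum_(i < n | ka i j) p 0 i * gain N i j) /
          (\sum_(k < n | ~~ ka k j) p 0 k * gain N k j * x 0 k + sigma2 N)).

Definition fvec (g : 'rV[R]_m) (ka : 'M[bool]_(n, m)) : 'rV[R]_n :=
  \row_i (\sum_(j < m | ka i j) dem N 0 j / (cM N * cB N * log2 (1 + g 0 j))).

Definition Fmap (p : 'rV[R]_n) (ka : 'M[bool]_(n, m)) (x : 'rV[R]_n) :=
  fvec (hvec x p ka) ka.

(* Fix{f(h(x,p,kappa),kappa)}: the unique fixed point of the map (chosen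
   classically); if there is no unique fixed point the starting point x is
   returned (this case does not arise under the paper's assumptions). *)
Definition Fixp (x p : 'rV[R]_n) (ka : 'M[bool]_(n, m)) : 'rV[R]_n :=
  xget x [set y | y = Fmap p ka y /\ forall z, z = Fmap p ka z -> z = y].

Definition enorm (v : 'rV[R]_n) : R := Num.sqrt (\sum_(i < n) v 0 i ^+ 2).

Definition set1mx (ka : 'M[bool]_(n, m)) (i : 'I_n) (j : 'I_m) :=
  \matrix_(a < n, b < m) if (a == i) && (b == j) then true else ka a b.

(* Cost model (number of elementary steps):                                 *)
(*   - one computation of Fix{...}                         : K              *)
(*   - one evaluation of f(h(.,p,kappa),kappa) or of f_i(h(.)) : n * m      *)
(*   - one operation on an n-vector (norm, scaling, max test) : n           *)
(*   - comparing two associations                          : n * m          *)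
(*   - any other loop step / scalar test                   : 1              *)
(* Fuel parameters bound the number of iterations of the while-loops;      *)
(* [None] means the fuel ran out (non-termination within the fuel).        *)
Variables (eps : R) (tau K : nat).

(* POLO main loop.  State: p (fixed input), lo = check-beta, hi = hat-beta,
   p' , p'' , x (current iterate), x' (last computed fixed point), cost. *)
Fixpoint polo_loop (fuel : nat) (ka : 'M[bool]_(n, m)) (p : 'rV[R]_n)
    (lo hi : R) (p1 p2 x x1 : 'rV[R]_n) (c : nat)
    : option ('rV[R]_n * 'rV[R]_n * nat) :=
  if eps < enorm (p1 - p2) then
    match fuel with
    | 0 => None
    | S fuel' =>
      let beta := (lo + hi) / 2 in
      let p2' := p1 in
      let p1' := beta *: p in
      let x1' := Fixp x p1' ka in
      let c' := (c + n + n + K + n + 1)%N in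
      if [exists i, 1 < x1' 0 i]
      then polo_loop fuel' ka p beta hi p1' p2' x1' x1' c'
      else polo_loop fuel' ka p lo beta p1' p2' x1' x1' c'
    end
  else Some (p1, x1, (c + n)%N).

(* POLO(p, x, kappa, eps); x' is initialised to x (it is only read if the
   while-loop body is never executed). *)
Definition POLO (fuel : nat) (p x : 'rV[R]_n) (ka : 'M[bool]_(n, m)) :=
  polo_loop fuel ka p 0 1 (p + eps *: const_mx 1) p x x 0%N.

(* AOLO inner loop over k = 1..tau for the pair (i, j).
   ka = kappa (marked entries), kw = kappa' (working copy),
   xk = x^(k-1), x1 = x'. *)
Fixpoint aolo_inner (t : nat) (p x : 'rV[R]_n) (i : 'I_n) (j : 'I_m)
    (ka kw : 'M[bool]_(n, m)) (xk x1 : 'rV[R]_n) (c : nat)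
    : 'M[bool]_(n, m) * 'M[bool]_(n, m) * 'rV[R]_n * nat :=
  match t with
  | 0 => (ka, kw, x1, c)
  | S t' =>
    if ~~ ka i j then
      let kw' := set1mx kw i j in
      let xk' := fvec (hvec xk p kw') ka in
      let c' := (c + n * m + n * m + 1)%N in
      if xk' 0 i <= (fvec (hvec xk' p kw') kw') 0 i then
        aolo_inner t' p x i j (set1mx ka i j) kw' xk' (Fixp x p kw') (c' + K)
      else aolo_inner t' p x i j ka kw' xk' x1 c'
    else aolo_inner t' p x i j ka kw xk x1 (c + 1)
  end.

(* AOLO(p, x, kappa, tau): returns (kappa', x', cost); x' is initialised
   to x. Pairs are visited in the canonical enumeration order. *)
Definition AOLO (p x : 'rV[R]_n) (ka : 'M[bool]_(n, m))
    : 'M[bool]_(n, m) * 'rV[R]_n * nat :=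
  let '(_, kw, x1, c) :=
    foldl (fun (st : 'M[bool]_(n, m) * 'M[bool]_(n, m) * 'rV[R]_n * nat)
                 (ij : 'I_n * 'I_m) =>
             let '(ka0, kw0, x0, c0) := st in
             if ~~ ka0 ij.1 ij.2 then
               aolo_inner tau p x ij.1 ij.2 ka0 kw0 x x0 (c0 + 1)
             else (ka0, kw0, x0, (c0 + 1)%N))
          (ka, ka, x, 0%N) [seq (i, j) | i <- enum 'I_n, j <- enum 'I_m] in
  (kw, x1, c).

Fixpoint palo_loop (fuel : nat) (p x : 'rV[R]_n) (ka : 'M[bool]_(n, m))
    (c : nat) : option ('rV[R]_n * 'M[bool]_(n, m) * nat) :=
  match fuel with
  | 0 => None
  | S fuel' =>
    match POLO fuel p x ka with
    | None => None
    | Some (p1, x1, c1) =>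
      let '(ka1, x2, c2) := AOLO p1 x1 ka in
      let c' := (c + c1 + c2 + n * m)%N in
      if ka1 == ka then Some (p1, ka1, c')
      else palo_loop fuel' p1 x2 ka1 c'
    end
  end.

Definition PALO (fuel : nat) (p x : 'rV[R]_n) (ka : 'M[bool]_(n, m)) :=
  palo_loop fuel p x ka 0%N.

End Model.

From HB Require Import structures.
From mathcomp Require Import all_boot all_order all_algebra.
From mathcomp Require Import reals.
From mathcomp Require Import zify lra.

(* POLO bisects the scaling factor beta of p on [0, 1]: after its first step
   every iterate is beta p, and two consecutive iterates differ by the current
   bracket width times ||p||, so it stops after O(log (||p|| / eps)) steps.
   Its only other possible output is p + eps 1, hence along PALO each power
   stays below pmax + (number of associated pairs) * eps; thus
   ||p|| <= n (pmax + n m eps) and each POLO call takes O(n + m) steps.  AOLO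
   spends at most tau steps on each of the n m pairs and only adds
   associations, so every PALO round but the last strictly enlarges the
   association: at most n m + 1 rounds, each of cost O(K n m) as n m <= K. *)

Set Implicit Arguments.
Unset Strict Implicit.
Unset Printing Implicit Defensive.

Import Order.TTheory GRing.Theory Num.Theory.
Local Open Scope ring_scope.

Section EuclideanNorm.
Variables (R : realType) (n : nat).

Lemma enorm_ge0 (v : 'rV[R]_n) : 0 <= enorm v.
Proof. exact: sqrtr_ge0. Qed.

Lemma enormZ (a : R) (v : 'rV[R]_n) : enorm (a *: v) = `|a| * enorm v.
Proof.
rewrite /enorm -sqrtr_sqr -sqrtrM ?sqr_ge0 // mulr_sumr.
by congr Num.sqrt; apply: eq_bigr => i _; rewrite mxE exprMn.
Qed.

Lemma enorm_le_coord (v : 'rV[R]_n) (P : R) :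
  0 <= P -> (forall i, `|v 0 i| <= P) -> enorm v <= n%:R * P.
Proof.
move=> P0 vP; rewrite -[n%:R * P]ger0_norm ?mulr_ge0 // -sqrtr_sqr.
apply: ler_wsqrtr; apply: (@le_trans _ _ (\sum_(i < n) P ^+ 2)).
  by apply: ler_sum => i _; rewrite -real_normK ?num_real // lerXn2r ?nnegrE.
rewrite sumr_const card_ord exprMn mulrC -[P ^+ 2 *+ n]mulr_natr.
rewrite ler_wpM2l ?sqr_ge0 //.
by rewrite -natrX ler_nat; nia.
Qed.

End EuclideanNorm.

Section Bracket.
Variable R : realType.

Definition bracket (lo hi b : R) :=
  [/\ 0 <= lo, lo <= hi, hi <= 1 & b = lo \/ b = hi].

Lemma bracket_unit lo hi b : bracket lo hi b -> 0 <= b <= 1.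
Proof. by case=> lo0 lohi hi1 [] ->; apply/andP; split; lra. Qed.

Lemma bracket_halve lo hi b lo' hi' : bracket lo hi b ->
  (lo', hi') = (lo, (lo + hi) / 2) \/ (lo', hi') = ((lo + hi) / 2, hi) ->
  bracket lo' hi' ((lo + hi) / 2) /\ hi' - lo' = (hi - lo) / 2.
Proof.
case=> lo0 lohi hi1 _ [] [-> ->]; do !split; try lra; by [right | left].
Qed.

Lemma enorm_mid_gap n lo hi b (p : 'rV[R]_n) : bracket lo hi b ->
  enorm ((lo + hi) / 2 *: p - b *: p) = (hi - lo) / 2 * enorm p.
Proof.
case=> _ lohi _ bE; rewrite -scalerBl enormZ; congr (_ * _).
by case: bE => ->; [rewrite ger0_norm | rewrite ler0_norm]; lra.
Qed.

End Bracket.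

Definition polo_step_cost (n K : nat) := (3 * n + K + 1)%N.

Section Bisection.
Variables (R : realType) (n m : nat) (N : network R n m) (eps : R) (K : nat).
Hypothesis eps_gt0 : 0 < eps.
Variables (ka : 'M[bool]_(n, m)) (p : 'rV[R]_n).

Local Notation polo_loop := (polo_loop N eps K).

Lemma polo_loop_stop f lo hi p1 p2 x x1 c :
  ~~ (eps < enorm (p1 - p2)) ->
  polo_loop f ka p lo hi p1 p2 x x1 c = Some (p1, x1, (c + n)%N).
Proof. by move/negbTE=> stop; case: f => [|f] /=; rewrite stop. Qed.

Lemma polo_loop_step f lo hi p1 p2 x x1 c :
  eps < enorm (p1 - p2) ->
  exists x' (lh : R * R),
    (lh = (lo, (lo + hi) / 2) \/ lh = ((lo + hi) / 2, hi)) /\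
    polo_loop f.+1 ka p lo hi p1 p2 x x1 c =
    polo_loop f ka p lh.1 lh.2 (((lo + hi) / 2) *: p) p1 x' x'
              (c + polo_step_cost n K)%N.
Proof.
move=> go /=; rewrite go.
rewrite (_ : (c + n + n + K + n + 1 = c + polo_step_cost n K)%N);
  last by rewrite /polo_step_cost; lia.
case: ifP => _; eexists.
  by exists ((lo + hi) / 2, hi); split; [right|].
by exists (lo, (lo + hi) / 2); split; [left|].
Qed.

Lemma polo_loop_bisect j : forall f lo hi b p1 p2 x x1 c,
  bracket lo hi b -> p1 = b *: p ->
  (hi - lo) * enorm p <= eps * 2 ^+ j -> (j < f)%N ->
  exists p' x' c',
    polo_loop f ka p lo hi p1 p2 x x1 c = Some (p', x', c') /\
    (c' <= c + j.+1 * polo_step_cost n K + n)%N /\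
    exists2 b', 0 <= b' <= 1 & p' = b' *: p.
Proof.
elim: j => [|j IH] f lo hi b p1 p2 x x1 c br p1E width jf.
all: have [go|stop] := boolP (eps < enorm (p1 - p2)); last first.
1,3: rewrite polo_loop_stop //; exists p1, x1, (c + n)%N; split=> //.
1,2: by split; [lia | exists b => //; exact: bracket_unit br].
all: case: f jf => [//|f] jf.
all: have [x' [[lo' hi'] [lhE ->]]] := polo_loop_step f lo hi x x1 c go.
all: have [br' width'] := bracket_halve br lhE.
all: have gap : enorm ((lo + hi) / 2 *: p - p1) = (hi' - lo') * enorm p
  by rewrite p1E width' enorm_mid_gap.
all: have w0 : 0 <= (hi - lo) * enorm p
  by case: br => _ lohi _ _; rewrite mulr_ge0 ?enorm_ge0 ?subr_ge0.
- rewrite polo_loop_stop; last first.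
    by rewrite -leNgt gap width'; rewrite expr0 mulr1 in width; lra.
  exists ((lo + hi) / 2 *: p), x', (c + polo_step_cost n K + n)%N; split=> //.
  by split; [lia | exists ((lo + hi) / 2) => //; exact: bracket_unit br'].
- have width_j : (hi' - lo') * enorm p <= eps * 2 ^+ j.
    by rewrite width' exprS in width *; lra.
  have [p' [x'' [c' [-> [cost scaled]]]]] := IH f lo' hi' ((lo + hi) / 2)
    (((lo + hi) / 2) *: p) p1 x' x' (c + polo_step_cost n K)%N
    br' erefl width_j jf.
  by exists p', x'', c'; split=> //; split=> //; lia.
Qed.

Lemma POLO_bound f x j (P : R) :
  (forall i, `|p 0 i| <= P) -> enorm p <= eps * 2 ^+ j.+1 -> (j.+1 < f)%N ->
  exists p1 x1 c1, POLO N eps K f p x ka = Some (p1, x1, c1) /\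
    (c1 <= j.+2 * polo_step_cost n K + n)%N /\ forall i, `|p1 0 i| <= P + eps.
Proof.
move=> pP pnorm jf; rewrite /POLO.
have [go|stop] := boolP (eps < enorm (p + eps *: const_mx 1 - p)); last first.
  rewrite polo_loop_stop //; exists (p + eps *: const_mx 1), x, (0 + n)%N.
  split=> //; split=> [|i]; first lia.
  rewrite !mxE mulr1 (le_trans (ler_normD _ _)) // (gtr0_norm eps_gt0) lerD2r.
  exact: pP.
case: f jf => [//|f] jf.
have [x' [[lo hi] [lhE ->]]] := polo_loop_step f 0 1 x x 0 go.
have br01 : bracket 0 1 (0 : R) by split; [lra | lra | lra | left].
have [br width] := bracket_halve br01 lhE.
have width_j : (hi - lo) * enorm p <= eps * 2 ^+ j.
  by rewrite width; rewrite exprS in pnorm; lra.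
have [p1 [x1 [c1 [-> [cost [b /andP[b0 b1] ->]]]]]] :=
  polo_loop_bisect (p + eps *: const_mx 1) x' x' (0 + polo_step_cost n K)%N
    br erefl width_j jf.
exists (b *: p), x1, c1; split=> //; split=> [|i]; first lia.
rewrite mxE normrM ger0_norm //.
have : `|p 0 i| <= P + eps by rewrite (le_trans (pP i)) // lerDl ltW.
by apply: le_trans; rewrite ler_piMl.
Qed.

End Bisection.

Section FoldlInvariants.
Variables (S T : Type) (F : S -> T -> S).

Lemma foldl_preorder (r : rel S) : reflexive r -> transitive r ->
  (forall s t, r s (F s t)) -> forall s l, r s (foldl F s l).
Proof.
move=> rr rt rF s l; elim: l s => [|t l IH] s //=.
exact: rt (rF s t) (IH _).
Qed.

Lemma foldl_size_le (g : S -> nat) (D : nat) :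
  (forall s t, (g (F s t) <= g s + D)%N) ->
  forall s l, (g (foldl F s l) <= g s + size l * D)%N.
Proof.
move=> gF s l; elim: l s => [|t l IH] s /=; first by rewrite addn0.
by have := gF s t; have := IH (F s t); lia.
Qed.

End FoldlInvariants.

Section Association.
Variables (n m : nat).

Definition mxsupp (ka : 'M[bool]_(n, m)) : {set 'I_n * 'I_m} :=
  [set ij | ka ij.1 ij.2].

Lemma mxsupp_inj : injective mxsupp.
Proof.
move=> a b eq_ab; apply/matrixP => i j.
by have := congr1 (fun A : {set _} => (i, j) \in A) eq_ab; rewrite !inE.
Qed.

Lemma mxsupp_set1mx ka i j : mxsupp ka \subset mxsupp (set1mx ka i j).
Proof. by apply/subsetP => -[a b]; rewrite !inE /= mxE => ->; case: ifP. Qed.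

Lemma card_mxsupp ka : (#|mxsupp ka| <= n * m)%N.
Proof. by rewrite (leq_trans (max_card _)) // card_prod !card_ord. Qed.

Lemma card_mxsupp_lt a b :
  mxsupp a \subset mxsupp b -> b != a -> (#|mxsupp a| < #|mxsupp b|)%N.
Proof.
move=> sub_ab neq_ba; apply: proper_card; rewrite properEneq sub_ab andbT.
by apply: contra neq_ba => /eqP/mxsupp_inj ->.
Qed.

End Association.

Definition aolo_step_cost (n m K : nat) := (n * m + n * m + 1 + K)%N.

Section Aolo.
Variables (R : realType) (n m : nat) (N : network R n m) (tau K : nat).
Variables (p x : 'rV[R]_n).

Lemma aolo_inner_mono i j t : forall ka kw xk x1 c,
  mxsupp kw \subset mxsupp (aolo_inner N K t p x i j ka kw xk x1 c).1.1.2.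
Proof.
elim: t => [|t IH] ka kw xk x1 c /=; first exact: subxx.
case: ifP => _; last exact: IH.
by case: ifP => _; apply: subset_trans (IH _ _ _ _ _); exact: mxsupp_set1mx.
Qed.

Lemma aolo_inner_cost i j t : forall ka kw xk x1 c,
  ((aolo_inner N K t p x i j ka kw xk x1 c).2
     <= c + t * aolo_step_cost n m K)%N.
Proof.
rewrite /aolo_step_cost; elim: t => [|t IH] ka kw xk x1 c /=.
  by rewrite addn0.
by do 2?case: ifP => _; apply: leq_trans (IH _ _ _ _ _) _; lia.
Qed.

Lemma AOLO_bound ka ka1 x1 c : AOLO N tau K p x ka = (ka1, x1, c) ->
  mxsupp ka \subset mxsupp ka1 /\
  (c <= n * m * (1 + tau * aolo_step_cost n m K))%N.
Proof.
rewrite /AOLO; set F := (fun _ _ => _); set l := [seq _ | _ <- _, _ <- _].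
have l_size : size l = (n * m)%N by rewrite size_allpairs !size_enum_ord.
have F_mono st ij : mxsupp st.1.1.2 \subset mxsupp (F st ij).1.1.2.
  by case: st => [[[a b] y] d]; rewrite /F /=; case: ifP => _;
    [exact: aolo_inner_mono | exact: subxx].
have F_cost st ij : ((F st ij).2 <= st.2 + (1 + tau * aolo_step_cost n m K))%N.
  case: st => [[[a b] y] d]; rewrite /F /=; case: ifP => _ /=; last lia.
  by apply: leq_trans (aolo_inner_cost _ _ _ _ _ _ _ _) _; lia.
pose r : rel ('M[bool]_(n, m) * 'M[bool]_(n, m) * 'rV[R]_n * nat) :=
  fun st st' => mxsupp st.1.1.2 \subset mxsupp st'.1.1.2.
have r_refl : reflexive r by move=> st; exact: subxx.
have r_trans : transitive r by move=> ? ? ?; exact: subset_trans.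
have mono := foldl_preorder r_refl r_trans F_mono (ka, ka, x, 0%N) l.
have cost := foldl_size_le F_cost (ka, ka, x, 0%N) l.
case: foldl mono cost => [[[a kw] y] d] mono cost [<- _ <-]; split=> //.
by rewrite l_size add0n in cost.
Qed.

End Aolo.

Definition palo_round_cost (n m K tau j : nat) :=
  (j.+2 * polo_step_cost n K + n +
   n * m * (1 + tau * aolo_step_cost n m K) + n * m)%N.

Section Palo.
Variables (R : realType) (n m : nat) (N : network R n m).
Variables (eps : R) (tau K : nat).
Hypothesis eps_gt0 : 0 < eps.
Variables (pmax : R) (j : nat).
Hypothesis enorm_pow2 : forall q : 'rV[R]_n,
  (forall i, `|q 0 i| <= pmax + (n * m)%:R * eps) -> enorm q <= eps * 2 ^+ j.+1.

Local Notation round_cost := (palo_round_cost n m K tau j).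

Lemma palo_loop_round f (p x : 'rV[R]_n) (ka : 'M[bool]_(n, m)) c :
  (forall i, `|p 0 i| <= pmax + #|mxsupp ka|%:R * eps) -> (j.+1 < f.+1)%N ->
  exists p1 x1 ka1 c1,
    [/\ palo_loop N eps tau K f.+1 p x ka c =
        (if ka1 == ka then Some (p1, ka1, c1)
         else palo_loop N eps tau K f p1 x1 ka1 c1),
        mxsupp ka \subset mxsupp ka1, (c1 <= c + round_cost)%N &
        forall i, `|p1 0 i| <= pmax + #|mxsupp ka|.+1%:R * eps].
Proof.
move=> pbound jf.
have pnorm : enorm p <= eps * 2 ^+ j.+1.
  apply: enorm_pow2 => i; rewrite (le_trans (pbound i)) // lerD2l.
  by rewrite ler_wpM2r ?ler_nat ?card_mxsupp // ltW.
have [p1 [x1 [c1 [polo [c1_le p1bound]]]]] :=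
  POLO_bound N K eps_gt0 ka x pbound pnorm jf.
case aolo: (AOLO N tau K p1 x1 ka) => [[ka1 x2] c2].
have [sub c2_le] := AOLO_bound aolo.
exists p1, x2, ka1, (c + c1 + c2 + n * m)%N; split=> //.
- by rewrite /= polo aolo.
- by rewrite /palo_round_cost; lia.
by move=> i; rewrite -natr1 mulrDl mul1r addrA.
Qed.

Lemma palo_loop_bound t :
  forall fuel (p x : 'rV[R]_n) (ka : 'M[bool]_(n, m)) c,
  (n * m - #|mxsupp ka| <= t)%N -> (t + j.+2 <= fuel)%N ->
  (forall i, `|p 0 i| <= pmax + #|mxsupp ka|%:R * eps) ->
  exists p' ka' c', palo_loop N eps tau K fuel p x ka c = Some (p', ka', c') /\
    (c' <= c + t.+1 * round_cost)%N.
Proof.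
elim: t => [|t IH] [|f] p x ka c supp_t fuel_t pbound; try by exfalso; lia.
all: have jf : (j.+1 < f.+1)%N by lia.
all: have [p1 [x1 [ka1 [c1 [-> sub c1_le p1bound]]]]] :=
  palo_loop_round x c pbound jf.
all: case: eqP => [_|/eqP neq].
1,3: by exists p1, ka1, c1; rewrite (leq_trans c1_le) // leq_add2l leq_pmull.
all: have grows := card_mxsupp_lt sub neq.
- by have := card_mxsupp ka1; lia.
- have p1bound' i : `|p1 0 i| <= pmax + #|mxsupp ka1|%:R * eps.
    rewrite (le_trans (p1bound i)) // lerD2l.
    by rewrite ler_wpM2r ?ler_nat // ltW.
  have [p' [ka' [c' [-> c'_le]]]] :=
    IH f p1 x1 ka1 c1 ltac:(lia) ltac:(lia) p1bound'.
  by exists p', ka', c'; split=> //; rewrite mulSn; lia.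
Qed.

End Palo.

Lemma exists_pow2_ge (R : realType) (a b : R) :
  0 < b -> exists A : nat, a <= b * 2 ^+ A.
Proof.
move=> b0; exists (Num.Def.archi_bound (a / b)).
by rewrite mulrC -ler_pdivrMr // ltW // upper_nthrootP.
Qed.

Lemma pow2_dominates (n m A : nat) :
  (n * 2 ^ A + n * (n * m) <= 2 ^ (A + 2 * n + m).+1)%N.
Proof.
have n_le : (n <= 2 ^ n)%N by exact/ltnW/ltn_expl.
have m_le : (m <= 2 ^ m)%N by exact/ltnW/ltn_expl.
have le1 : (n * 2 ^ A <= 2 ^ (A + 2 * n + m))%N.
  by rewrite (leq_trans (leq_mul n_le (leqnn _))) // -expnD leq_pexp2l //; lia.
have le2 : (n * (n * m) <= 2 ^ (A + 2 * n + m))%N.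
  rewrite (leq_trans (leq_mul n_le (leq_mul n_le m_le))) //.
  by rewrite -!expnD leq_pexp2l //; lia.
by rewrite expnS mul2n -addnn leq_add.
Qed.

Lemma enorm_le_pow2 (R : realType) (n m A : nat) (eps pmax : R) :
  0 < eps -> 0 <= pmax -> pmax <= eps * 2 ^+ A -> forall q : 'rV[R]_n,
  (forall i, `|q 0 i| <= pmax + (n * m)%:R * eps) ->
  enorm q <= eps * 2 ^+ (A + 2 * n + m).+1.
Proof.
move=> eps0 pmax0 pmaxA q qbound.
have bound0 : 0 <= pmax + (n * m)%:R * eps.
  by rewrite addr_ge0 // mulr_ge0 // ltW.
apply: (le_trans (enorm_le_coord bound0 qbound)).
have := pow2_dominates n m A; rewrite -(ler_nat R) natrD !natrM !natrX => dom.
apply: le_trans (ler_wpM2l (ltW eps0) dom).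
have n0 : 0 <= n%:R :> R by exact: ler0n.
nra.
Qed.

Lemma palo_cost_le (n m K tau A : nat) :
  (0 < n)%N -> (0 < m)%N -> (n * m <= K)%N ->
  ((n * m).+1 * palo_round_cost n m K tau (A + 2 * n + m)
    <= 2 * (5 * A + 28 + 4 * tau) * K * m ^ 2 * n ^ 2)%N.
Proof. by rewrite /palo_round_cost /polo_step_cost /aolo_step_cost; nia. Qed.

Theorem theorem3 (R : realType) (eps : R) (tau : nat) (pmax : R) :
  0 < eps -> 0 < pmax ->
  exists C : nat,
    forall (n m : nat) (N : network R n m) (K : nat)
           (p x : 'rV[R]_n) (ka : 'M[bool]_(n, m)),
      (0 < n)%N -> (0 < m)%N ->
      (forall j, 0 < dem N 0 j) -> 0 < sigma2 N ->
      (forall i j, 0 < gain N i j) -> 0 < cM N -> 0 < cB N ->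
      (forall i, 0 < p 0 i <= pmax) ->
      (n * m <= K)%N ->
      exists (fuel : nat) (p' : 'rV[R]_n) (ka' : 'M[bool]_(n, m)) (c : nat),
        PALO N eps tau K fuel p x ka = Some (p', ka', c) /\
        (c <= C * K * m ^ 2 * n ^ 2)%N.
Proof.
move=> eps0 pmax0; have [A pmaxA] := exists_pow2_ge pmax eps0.
exists (2 * (5 * A + 28 + 4 * tau))%N.
move=> n m N K p x ka n0 m0 _ _ _ _ _ p_pos nmK.
have pbound i : `|p 0 i| <= pmax + #|mxsupp ka|%:R * eps.
  have /andP[pi0 pi_max] := p_pos i.
  by rewrite gtr0_norm // ler_wpDr // mulr_ge0 // ltW.
have [p' [ka' [c [run cost]]]] := palo_loop_bound N tau K eps0
  (enorm_le_pow2 eps0 (ltW pmax0) pmaxA) x 0 (leq_subr _ _) (leqnn _) pbound.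
exists (n * m + (A + 2 * n + m).+2)%N, p', ka', c; split=> //.
by rewrite (leq_trans cost) // add0n palo_cost_le.
Qed.
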